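(* Let $\Omega\subset\mathbb{R}^N$ be a uniformly smooth domain with outer unit normal $\nu$. Let $v_1\in W^{1,\infty}(\Omega\times\mathbb{R})$ and $v_2\in C^1(\overline\Omega\times\mathbb{R})$ satisfy: $v_1\le v_2$ on $\partial\Omega\times\mathbb{R}$; the spatial gradient $\nabla v_2$ is uniformly continuous on $\overline\Omega\times\mathbb{R}$; $$\sup_{\partial\Omega\times\mathbb{R}}\big(v_1-v_2+\min(\partial_\nu v_2,0)\big)<0;$$ and for every $\varepsilon>0$, $\inf\{v_2(x,t):\ \mathrm{dist}(x,\mathbb{R}^N\setminus\Omega)>\varepsilon,\ t\in\mathbb{R}\}>0$. Then there is a constant $k>0$ such that $kv_2\ge v_1$ in $\Omega\times\mathbb{R}$.
   Context: $\partial_\nu v_2=\nu\cdot\nabla v_2$ denotes the outer normal derivative on $\partial\Omega$. *)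

From mathcomp Require Import ssreflect ssrfun ssrbool eqtype ssrnat seq fintype.
From Stdlib Require Import Reals.
Local Open Scope R_scope.

Definition pt (N : nat) := 'I_N -> R.

Definition vzero {N} : pt N := fun _ => 0.
Definition vsub {N} (x y : pt N) : pt N := fun i => x i - y i.
Definition vscale {N} (a : R) (x : pt N) : pt N := fun i => a * x i.

Definition dot {N} (x y : pt N) : R :=
  foldr (fun i acc => x i * y i + acc) 0 (enum 'I_N).
Definition norm {N} (x : pt N) : R := sqrt (dot x x).
Definition dist {N} (x y : pt N) : R := norm (vsub x y).

Definition dist2 {N} (x : pt N) (t : R) (y : pt N) (s : R) : R :=
  sqrt (dist x y ^ 2 + (t - s) ^ 2).

Definition is_open {N} (O : pt N -> Prop) : Prop :=
  forall x, O x -> exists r, 0 < r /\ forall y, dist y x < r -> O y.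

Definition connected {N} (O : pt N -> Prop) : Prop :=
  ~ exists A B : pt N -> Prop,
      is_open A /\ is_open B /\ (forall x, O x <-> (A x \/ B x)) /\
      (forall x, ~ (A x /\ B x)) /\ (exists x, A x) /\ (exists x, B x).

Definition domain {N} (O : pt N -> Prop) : Prop :=
  is_open O /\ connected O /\ exists x, O x.

Definition closure {N} (O : pt N -> Prop) (x : pt N) : Prop :=
  forall e, 0 < e -> exists y, O y /\ dist y x < e.

Definition boundary {N} (O : pt N -> Prop) (x : pt N) : Prop :=
  closure O x /\ ~ O x.

(* dist(x, R^N \ O) > e  (the infimum of the empty set being +infinity) *)
Definition dist_compl_gt {N} (O : pt N -> Prop) (x : pt N) (e : R) : Prop :=
  exists eta, e < eta /\ forall y, ~ O y -> eta <= dist x y.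

Definition has_grad {N} (f : pt N -> R) (x : pt N) (g : pt N) : Prop :=
  forall e, 0 < e -> exists d, 0 < d /\ forall y, dist y x < d ->
    Rabs (f y - f x - dot g (vsub y x)) <= e * dist y x.

Definition continuous_pt {N} (f : pt N -> R) (x : pt N) : Prop :=
  forall e, 0 < e -> exists d, 0 < d /\ forall y, dist y x < d ->
    Rabs (f y - f x) < e.

Definition proj_perp {N} (n z : pt N) : pt N := vsub z (vscale (dot z n) n).

(* Uniformly C^2 (uniformly smooth) domain: there are r > 0, M > 0 such that
   near every boundary point x0, within the ball B(x0, r), O is the region
   below the graph of a C^2 function phi over the tangent hyperplane (in the
   direction of a unit vector n), with phi(0) = 0, grad phi(0) = 0 and the
   first and second derivatives of phi bounded by M. *)
Definition uniformly_smooth {N} (O : pt N -> Prop) : Prop :=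
  exists r M, 0 < r /\ 0 < M /\
  forall x0, boundary O x0 ->
    exists (n : pt N) (phi : pt N -> R) (g : pt N -> pt N) (h : pt N -> 'I_N -> pt N),
      norm n = 1 /\
      (forall z, has_grad phi z (g z)) /\
      (forall z i, has_grad (fun w => g w i) z (h z i)) /\
      (forall z i j, continuous_pt (fun w => h w i j) z) /\
      (forall z, norm (g z) <= M) /\
      (forall z i j, Rabs (h z i j) <= M) /\
      phi vzero = 0 /\ (forall i, g vzero i = 0) /\
      (forall y, dist y x0 < r ->
         (O y <-> dot (vsub y x0) n < phi (proj_perp n (vsub y x0)))).

Definition outer_unit_normal {N} (O : pt N -> Prop) (x nu : pt N) : Prop :=
  norm nu = 1 /\
  forall e, 0 < e -> exists d, 0 < d /\ forall y, 0 < dist y x < d ->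
    (dot (vsub y x) nu > e * dist y x -> ~ closure O y) /\
    (dot (vsub y x) nu < - e * dist y x -> O y).

(* v in W^{1,oo}(O x R), represented by its (Lipschitz) continuous extension
   to closure(O) x R: bounded and Lipschitz on closure(O) x R. *)
Definition W1inf {N} (O : pt N -> Prop) (v : pt N -> R -> R) : Prop :=
  (exists B, forall x t, closure O x -> Rabs (v x t) <= B) /\
  (exists L, forall x t y s, closure O x -> closure O y ->
      Rabs (v x t - v y s) <= L * dist2 x t y s).

(* v in C^1(closure(O) x R) with spatial gradient G and time derivative D:
   v is differentiable in (x,t) on O x R with derivative (G, D), and
   v, G, D extend continuously to closure(O) x R. *)
Definition C1_closure {N} (O : pt N -> Prop) (v : pt N -> R -> R)
    (G : pt N -> R -> pt N) (D : pt N -> R -> R) : Prop :=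
  (forall x t, O x -> forall e, 0 < e -> exists d, 0 < d /\
     forall y s, dist2 y s x t < d ->
       Rabs (v y s - v x t - dot (G x t) (vsub y x) - D x t * (s - t))
         <= e * dist2 y s x t) /\
  (forall x t, closure O x -> forall e, 0 < e -> exists d, 0 < d /\
     forall y s, closure O y -> dist2 y s x t < d ->
       Rabs (v y s - v x t) < e /\ norm (vsub (G y s) (G x t)) < e /\
       Rabs (D y s - D x t) < e).

Definition unif_cont_closure {N} (O : pt N -> Prop) (G : pt N -> R -> pt N) : Prop :=
  forall e, 0 < e -> exists d, 0 < d /\
    forall x t y s, closure O x -> closure O y -> dist2 x t y s < d ->
      norm (vsub (G x t) (G y s)) < e.

From Pilot Require Import Defs.
From mathcomp Require Import ssreflect ssrfun ssrbool eqtype ssrnat seq fintype.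
From Stdlib Require Import Reals Lra Psatz FunctionalExtensionality ClassicalEpsilon Classical.
Import Defs.
Open Scope R_scope.

(* Far from the boundary v2 is bounded below and v1 is bounded, so only a boundary layer
   matters.  A point x of the layer is x0 - rho nu(x0) for a nearest point x0 of the
   complement, and the uniform charts put the inward normal segment of a fixed length R0
   inside Omega.  Uniform continuity of the gradient makes v2 affine along that segment
   with slope -d_nu v2(x0), up to an error (c/2) s, while v1(x) <= v1(x0) + L rho.  If
   d_nu v2(x0) >= 0, positivity of v2 at depth R0/2 bounds the slope and the gap condition
   gives v1(x0) <= v2(x0) - c; if d_nu v2(x0) lies in [-3c/4, 0) it gives
   v1(x0) <= v2(x0) - c/4; below -3c/4, v2 grows inward at rate c/4 and absorbs L rho. *)

Definition dot_on {N} (s : seq 'I_N) (x y : pt N) : R :=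
  foldr (fun i acc => x i * y i + acc) 0 s.

Section DotOn.
Context {N : nat}.
Implicit Types (s : seq 'I_N) (x y p q w : pt N).

Lemma dot_onC s x y : dot_on s x y = dot_on s y x.
Proof. by elim: s => [|i s IH] /=; rewrite ?IH; ring. Qed.

Lemma dot_on_linl s a b p q w :
  dot_on s (fun i => a * p i + b * q i) w = a * dot_on s p w + b * dot_on s q w.
Proof. by elim: s => [|i s IH] /=; rewrite ?IH; ring. Qed.

Lemma dot_on_ge0 s x : 0 <= dot_on s x x.
Proof. elim: s => [|i s IH] /=; nra. Qed.

Lemma sqr_coord_le_dot_on s x i : i \in s -> x i * x i <= dot_on s x x.
Proof.
elim: s => [|j s IH] //=; rewrite in_cons => /orP [/eqP ->|/IH];
  have := dot_on_ge0 s x; nra.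
Qed.

Lemma dot_on_eq0 s x : dot_on s x x = 0 -> forall i, i \in s -> x i = 0.
Proof. by move=> x0 i /(sqr_coord_le_dot_on _ x); rewrite x0; nra. Qed.

Lemma dot_on0l s x y : (forall i, i \in s -> x i = 0) -> dot_on s x y = 0.
Proof.
elim: s => [|j s IH] x0 //=.
rewrite x0 ?mem_head // IH; first ring.
by move=> i si; apply: x0; rewrite in_cons si orbT.
Qed.

Lemma dot_on_CS s x y : dot_on s x y * dot_on s x y <= dot_on s x x * dot_on s y y.
Proof.
have xx0 := dot_on_ge0 s x; have yy0 := dot_on_ge0 s y.
have [yy_eq0|yy_neq0] := Req_dec (dot_on s y y) 0.
  by rewrite dot_onC dot_on0l //=; [nra | exact: dot_on_eq0].
set t := dot_on s x y / dot_on s y y.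
have := dot_on_ge0 s (fun i => 1 * x i + (- t) * y i).
rewrite !dot_on_linl ![dot_on s _ (fun i => _ + _)]dot_onC !dot_on_linl (dot_onC s y x).
have t_def : t * dot_on s y y = dot_on s x y by rewrite /t; field.
nra.
Qed.

Lemma dot_on_cv s (a b : nat -> pt N) a0 b0 :
  (forall i, Un_cv (fun k => a k i) (a0 i)) -> (forall i, Un_cv (fun k => b k i) (b0 i)) ->
  Un_cv (fun k => dot_on s (a k) (b k)) (dot_on s a0 b0).
Proof.
move=> cva cvb; elim: s => [|i s IH] /=.
  by move=> e e0; exists 0%nat => k _; rewrite /R_dist Rminus_diag Rabs_R0.
exact: CV_plus (CV_mult _ _ _ _ (cva i) (cvb i)) IH.
Qed.

End DotOn.

Section Euclid.
Context {N : nat}.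
Implicit Types (x y z p q w : pt N).

Lemma dotE x y : dot x y = dot_on (enum 'I_N) x y.
Proof. by []. Qed.

Lemma dotC x y : dot x y = dot y x.
Proof. exact: dot_onC. Qed.

Lemma dot_linl a b p q w :
  dot (fun i => a * p i + b * q i) w = a * dot p w + b * dot q w.
Proof. exact: dot_on_linl. Qed.

Lemma dot_linr a b p q w :
  dot w (fun i => a * p i + b * q i) = a * dot w p + b * dot w q.
Proof. by rewrite dotC dot_linl !(dotC w). Qed.

Lemma dot_scalel a p w : dot (fun i => a * p i) w = a * dot p w.
Proof. rewrite !dotE; elim: (enum 'I_N) => [|i s IH] /=; rewrite ?IH; ring. Qed.

Lemma dot_subl p q w : dot (vsub p q) w = dot p w - dot q w.
Proof. rewrite !dotE; elim: (enum 'I_N) => [|i s IH] /=; rewrite ?IH /vsub; ring. Qed.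

Lemma dot_ge0 x : 0 <= dot x x.
Proof. exact: dot_on_ge0. Qed.

Lemma dot0l y : dot vzero y = 0.
Proof. exact: dot_on0l. Qed.

Lemma dot_self_eq0 x : dot x x = 0 -> forall i, x i = 0.
Proof. by move=> x0 i; apply: (@dot_on_eq0 _ (enum _) x x0); rewrite mem_enum. Qed.

Lemma dot_cv (a b : nat -> pt N) a0 b0 :
  (forall i, Un_cv (fun k => a k i) (a0 i)) -> (forall i, Un_cv (fun k => b k i) (b0 i)) ->
  Un_cv (fun k => dot (a k) (b k)) (dot a0 b0).
Proof. exact: dot_on_cv. Qed.

Lemma norm_ge0 x : 0 <= norm x.
Proof. exact: sqrt_pos. Qed.

Lemma norm_sqr x : norm x * norm x = dot x x.
Proof. exact/sqrt_sqrt/dot_ge0. Qed.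

Lemma norm_of_dot x r : 0 <= r -> dot x x = r * r -> norm x = r.
Proof. by move=> r0 xr; rewrite /norm xr sqrt_square. Qed.

Lemma norm_lt_of_dot x r : 0 <= r -> dot x x < r * r -> norm x < r.
Proof.
by move=> r0 xr; rewrite -(sqrt_square r) //; apply: sqrt_lt_1 => //; [apply: dot_ge0 | nra].
Qed.

Lemma norm_scale a x : norm (fun i => a * x i) = Rabs a * norm x.
Proof.
apply: norm_of_dot; first by apply: Rmult_le_pos; [apply: Rabs_pos | apply: norm_ge0].
rewrite dot_scalel dotC dot_scalel.
have -> : Rabs a * norm x * (Rabs a * norm x) = (Rabs a * Rabs a) * (norm x * norm x) by ring.
by rewrite -Rabs_mult Rabs_pos_eq ?norm_sqr; nra.
Qed.

Lemma dot_CS x y : Rabs (dot x y) <= norm x * norm y.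
Proof.
have := dot_on_CS (enum 'I_N) x y; rewrite -!dotE -norm_sqr -(norm_sqr y) => CS.
have := norm_ge0 x; have := norm_ge0 y => y0 x0.
rewrite -[_ * _]Rabs_pos_eq; last by apply: Rmult_le_pos.
by apply: Rsqr_le_abs_0; rewrite /Rsqr; nra.
Qed.

Lemma coord_le_norm x i : Rabs (x i) <= norm x.
Proof.
have := @sqr_coord_le_dot_on _ (enum 'I_N) x i; rewrite mem_enum -dotE -norm_sqr => /(_ isT) xi.
rewrite -[norm x]Rabs_pos_eq; last exact: norm_ge0.
by apply: Rsqr_le_abs_0; rewrite /Rsqr; lra.
Qed.

Lemma dist_ge0 x y : 0 <= dist x y.
Proof. exact: norm_ge0. Qed.

Lemma distC x y : dist x y = dist y x.
Proof.
rewrite /dist (_ : vsub x y = fun i => -1 * vsub y x i).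
  by rewrite norm_scale Rabs_Ropp Rabs_R1 Rmult_1_l.
by apply: functional_extensionality => i; rewrite /vsub; ring.
Qed.

Lemma dist_self x : dist x x = 0.
Proof.
rewrite /dist (_ : vsub x x = fun i => 0 * x i) ?norm_scale ?Rabs_R0 ?Rmult_0_l //.
by apply: functional_extensionality => i; rewrite /vsub; ring.
Qed.

Lemma dist2_same x y t : dist2 x t y t = dist x y.
Proof.
rewrite /dist2 Rminus_diag /= !Rmult_1_r Rmult_0_l Rplus_0_r sqrt_square //.
exact: dist_ge0.
Qed.

End Euclid.

Lemma Un_cv_const (c : R) : Un_cv (fun _ => c) c.
Proof. by move=> e e0; exists 0%nat => k _; rewrite /R_dist Rminus_diag Rabs_R0. Qed.

Lemma Un_cv_subseq (u : nat -> R) l (phi : nat -> nat) :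
  (forall k, (k <= phi k)%coq_nat) -> Un_cv u l -> Un_cv (fun k => u (phi k)) l.
Proof.
move=> phik cvu e e0; have [K HK] := cvu e e0; exists K => k kK.
by apply: HK; have := phik k; rewrite /ge in kK *; lia.
Qed.

Lemma Un_cv_of_rate (u : nat -> R) l :
  (forall k, Rabs (u k - l) < / (INR k + 1)) -> Un_cv u l.
Proof.
move=> rate e e0; have [K HK] := RinvN_cv e0; exists K => k kK.
have := HK k kK; rewrite /R_dist /= Rminus_0_r Rabs_pos_eq.
  by have := rate k; lra.
by apply/Rlt_le/Rinv_0_lt_compat; have := pos_INR k; lra.
Qed.

Lemma bounded_subseq_cv (u : nat -> R) K : (forall k, Rabs (u k) <= K) ->
  exists phi : nat -> nat, (forall k, (k <= phi k)%coq_nat) /\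
    exists l, Un_cv (fun k => u (phi k)) l.
Proof.
move=> uK.
have [l adh] : exists l, ValAdh u l.
  apply: (Bolzano_Weierstrass u (fun z => -K <= z <= K) (compact_P3 _ _)) => k.
  by have := uK k; rewrite /Rabs; case: Rcase_abs; lra.
have near_l k : exists p, (k <= p)%coq_nat /\ Rabs (u p - l) < / (INR k + 1).
  apply: (adh (fun z => Rabs (z - l) < / (INR k + 1))).
  by exists (RinvN k) => z; rewrite /disc.
have [phi phiP] := choice _ near_l.
exists phi; split=> [k|]; first exact: (proj1 (phiP k)).
by exists l; apply: Un_cv_of_rate => k; exact: (proj2 (phiP k)).
Qed.

Lemma bounded_pt_subseq_cv {N} (y : nat -> pt N) :
  (forall i, exists K, forall k, Rabs (y k i) <= K) ->
  exists phi : nat -> nat, (forall k, (k <= phi k)%coq_nat) /\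
    exists l : pt N, forall i, Un_cv (fun k => y (phi k) i) (l i).
Proof.
move=> ybd.
suff [phi [phik [l cvl]]] : exists phi : nat -> nat, (forall k, (k <= phi k)%coq_nat) /\
    exists l : pt N, forall i, i \in enum 'I_N -> Un_cv (fun k => y (phi k) i) (l i).
  by exists phi; split=> //; exists l => i; apply: cvl; rewrite mem_enum.
elim: (enum 'I_N) => [|j s [phi1 [phi1k [l1 cvl1]]]].
  by exists (fun k => k); split=> [k|]; [lia | exists vzero].
have [K yjK] := ybd j.
have [phi2 [phi2k [lj cvlj]]] := bounded_subseq_cv (fun k => y (phi1 k) j) K (fun k => yjK _).
exists (fun k => phi1 (phi2 k)); split=> [k|].
  by have := phi1k (phi2 k); have := phi2k k; lia.
exists (fun i => if i == j then lj else l1 i) => i; rewrite in_cons.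
case: eqP => [->|_ /= si] //.
exact: (Un_cv_subseq (fun k => y (phi1 k) i) _ _ phi2k (cvl1 i si)).
Qed.

Lemma dist_cv {N} (a b : nat -> pt N) a0 b0 :
  (forall i, Un_cv (fun k => a k i) (a0 i)) -> (forall i, Un_cv (fun k => b k i) (b0 i)) ->
  Un_cv (fun k => dist (a k) (b k)) (dist a0 b0).
Proof.
move=> cva cvb.
have cvab i : Un_cv (fun k => vsub (a k) (b k) i) (vsub a0 b0 i) by exact: CV_minus.
apply: (continuity_seq sqrt (fun k => dot (vsub (a k) (b k)) (vsub (a k) (b k)))).
  exact/continuity_pt_sqrt/dot_ge0.
exact: dot_cv.
Qed.

Lemma inf_dist_approx {N} (A : pt N -> Prop) x : (exists y, A y) ->
  exists rho (y : nat -> pt N), (forall z, A z -> rho <= dist x z) /\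
    forall k, A (y k) /\ dist x (y k) < rho + / (INR k + 1).
Proof.
move=> [y0 Ay0].
set E := fun r => exists y, A y /\ r = - dist x y.
have [m [ub lub]] : {m | is_lub E m}.
  apply: completeness; last by exists (- dist x y0), y0.
  by exists 0 => r [y [_ ->]]; have := dist_ge0 x y; lra.
have low z : A z -> - m <= dist x z.
  by move=> Az; have := ub (- dist x z) (ex_intro _ z (conj Az erefl)); lra.
have approx k : exists y, A y /\ dist x y < - m + / (INR k + 1).
  apply: NNPP => none.
  have k0 : 0 < / (INR k + 1) by apply: Rinv_0_lt_compat; have := pos_INR k; lra.
  have : m <= m - / (INR k + 1); last lra.
  apply: lub => r [y [Ay ->]]; apply: Rnot_lt_le => lt.
  by apply: none; exists y; split=> //; lra.
have [y yP] := choice _ approx.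
by exists (- m), y.
Qed.

Lemma exists_nearest_outside {N} (O : pt N -> Prop) x : is_open O -> (exists y, ~ O y) ->
  exists x0, ~ O x0 /\ forall y, ~ O y -> dist x x0 <= dist x y.
Proof.
move=> Oopen outside.
have [rho [y [rho_low yP]]] := inf_dist_approx _ x outside.
have ybd i : exists K, forall k, Rabs (y k i) <= K.
  exists (Rabs (x i) + rho + 1) => k.
  have := coord_le_norm (vsub x (y k)) i; have := proj2 (yP k).
  have : / (INR k + 1) <= 1.
    by rewrite -Rinv_1; apply: Rinv_le_contravar; have := pos_INR k; lra.
  have := Rabs_triang (x i) (- (x i - y k i)); rewrite Rabs_Ropp /dist /vsub.
  have -> : x i + - (x i - y k i) = y k i by ring.
  lra.
have [phi [phik [l cvl]]] := bounded_pt_subseq_cv y ybd.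
exists l; split.
  move=> Ol; have [r [r0 ball]] := Oopen l Ol.
  have := dist_cv (fun k => y (phi k)) (fun _ => l) l l cvl (fun i => Un_cv_const (l i)).
  rewrite dist_self => /(_ r r0) [K /(_ K (le_n K))].
  rewrite /R_dist Rminus_0_r Rabs_pos_eq; last exact: dist_ge0.
  by move=> near; apply: (proj1 (yP (phi K))); apply: ball.
move=> z Oz; apply: (Rle_trans _ rho _ _ (rho_low z Oz)).
apply: (@Rle_cv_lim (fun k => dist x (y (phi k))) (fun k => rho + / (INR (phi k) + 1))).
- by move=> k; apply/Rlt_le/(proj2 (yP (phi k))).
- exact: dist_cv (fun i => Un_cv_const (x i)) cvl.
- rewrite -[X in Un_cv _ X]Rplus_0_r.
  exact: CV_plus (Un_cv_const rho) (Un_cv_subseq _ _ _ phik RinvN_cv).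
Qed.

Definition along {N} (p w : pt N) (s : R) : pt N := fun i => p i + s * w i.

Section Lines.
Context {N : nat}.
Implicit Types (p u v w z : pt N).

Lemma along0 p w : along p w 0 = p.
Proof. by apply: functional_extensionality => i; rewrite /along; ring. Qed.

Lemma vsub_along p w s : vsub (along p w s) p = fun i => s * w i.
Proof. by apply: functional_extensionality => i; rewrite /vsub /along; ring. Qed.

Lemma dist_along p w s s' : dist (along p w s) (along p w s') = Rabs (s - s') * norm w.
Proof.
rewrite /dist -norm_scale; congr norm.
by apply: functional_extensionality => i; rewrite /vsub /along; ring.
Qed.

Lemma dist_along0 p w s : dist (along p w s) p = Rabs s * norm w.
Proof. by rewrite -{2}(along0 p w) dist_along Rminus_0_r. Qed.

Lemma dot_unit u : norm u = 1 -> dot u u = 1.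
Proof. by move=> u1; rewrite -norm_sqr u1 Rmult_1_l. Qed.

Lemma dot_sub_unit_l u v : norm u = 1 -> norm v = 1 ->
  dot (vsub u v) u = dot (vsub u v) (vsub u v) / 2.
Proof.
move=> /dot_unit u1 /dot_unit v1.
by rewrite !dot_subl !(dotC _ (vsub u v)) !dot_subl u1 v1 (dotC v u); field.
Qed.

Lemma dot_sub_unit_r u v : norm u = 1 -> norm v = 1 ->
  dot (vsub u v) v = - (dot (vsub u v) (vsub u v) / 2).
Proof.
move=> /dot_unit u1 /dot_unit v1.
by rewrite !dot_subl !(dotC _ (vsub u v)) !dot_subl u1 v1 (dotC v u); field.
Qed.

Lemma eq_of_dot_sub0 u v : dot (vsub u v) (vsub u v) = 0 -> u = v.
Proof.
move=> /dot_self_eq0 uv; apply: functional_extensionality => i.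
by have := uv i; rewrite /vsub; lra.
Qed.

Lemma norm_proj_perp_le n z : norm n = 1 -> norm (proj_perp n z) <= norm z.
Proof.
move=> /dot_unit n1.
have -> : proj_perp n z = fun i => 1 * z i + (- dot z n) * n i.
  by apply: functional_extensionality => i; rewrite /proj_perp /vsub /vscale; ring.
apply: sqrt_le_1; [exact: dot_ge0 | exact: dot_ge0 |].
rewrite dot_linl !dot_linr n1 (dotC n z); nra.
Qed.

End Lines.

Lemma closure_of {N} (O : pt N -> Prop) x : O x -> closure O x.
Proof. by move=> Ox e e0; exists x; rewrite dist_self. Qed.

Section NearestBoundaryPoint.
Context {N : nat} {O : pt N -> Prop}.
Hypothesis O_open : is_open O.

Lemma dist_outside_pos x y : O x -> ~ O y -> 0 < dist x y.
Proof.
move=> Ox Oy; have [r [r0 ball]] := O_open x Ox.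
apply: Rnot_le_lt => le; apply: Oy; apply: ball.
by rewrite distC; have := dist_ge0 x y; lra.
Qed.

Context {x x0 : pt N}.
Hypotheses (Ox : O x) (Ox0 : ~ O x0)
  (nearest : forall y, ~ O y -> dist x x0 <= dist x y).

Lemma nearer_point_inside y : dist x y < dist x x0 -> O y.
Proof. by move=> lt; apply: NNPP => Oy; have := nearest y Oy; lra. Qed.

Lemma nearest_outside_boundary : boundary O x0.
Proof.
split=> // e e0; have rho0 := dist_outside_pos x x0 Ox Ox0.
set s := Rmin (1 / 2) (e / (2 * dist x x0)).
have s0 : 0 < s by apply: Rmin_pos; [lra | apply: Rdiv_lt_0_compat; lra].
have s_half : s <= 1 / 2 := Rmin_l _ _.
have s_e : s * dist x x0 <= e / 2.
  have := Rmin_r (1 / 2) (e / (2 * dist x x0)); rewrite -/s => se.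
  have := Rmult_le_compat_r _ _ _ (Rlt_le _ _ rho0) se.
  by have -> : e / (2 * dist x x0) * dist x x0 = e / 2 by field; lra.
have x_along : x = along x0 (vsub x x0) 1.
  by apply: functional_extensionality => i; rewrite /along /vsub; ring.
exists (along x0 (vsub x x0) s); split.
  apply: nearer_point_inside.
  by rewrite {1}x_along dist_along Rabs_pos_eq -/(dist x x0); nra.
by rewrite dist_along0 Rabs_pos_eq -/(dist x x0); lra.
Qed.

Lemma nearest_outside_along_normal nu :
  outer_unit_normal O x0 nu -> x = along x0 (vscale (-1) nu) (dist x x0).
Proof.
move=> [nu1 normal]; set rho := dist x x0.
have rho0 : 0 < rho := dist_outside_pos x x0 Ox Ox0.
set u := fun i => / rho * vsub x0 x i.
have u1 : norm u = 1.
  rewrite norm_scale Rabs_pos_eq; last exact/Rlt_le/Rinv_0_lt_compat.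
  by rewrite -[norm _]/(dist x0 x) distC -/rho; field; lra.
suff nu_u : nu = u.
  apply: functional_extensionality => i.
  by rewrite /along /vscale nu_u /u /vsub; field; lra.
apply: eq_of_dot_sub0; set w := vsub nu u; apply: NNPP => w_neq0.
set a := norm w.
have a0 : 0 < a by apply: sqrt_lt_R0; have := dot_ge0 w; lra.
have a2 : a * a = dot w w := norm_sqr w.
have [d [d0 cone]] := normal (a / 4) ltac:(lra).
set s := Rmin (d / (2 * a)) (rho / 2).
have s0 : 0 < s by apply: Rmin_pos; apply: Rdiv_lt_0_compat; lra.
have s_rho : s <= rho / 2 := Rmin_r _ _.
have sa_d : s * a <= d / 2.
  have := Rmin_l (d / (2 * a)) (rho / 2); rewrite -/s => sd.
  have := Rmult_le_compat_r _ _ _ (Rlt_le _ _ a0) sd.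
  by have -> : d / (2 * a) * a = d / 2 by field; lra.
have dist_y : dist (along x0 w s) x0 = s * a by rewrite dist_along0 Rabs_pos_eq //; lra.
have [outside _] := cone (along x0 w s) ltac:(rewrite dist_y; split; nra).
apply: outside.
  rewrite vsub_along dot_scalel dist_y dot_sub_unit_l // -/w -a2; nra.
apply: closure_of; apply: nearer_point_inside; rewrite distC.
change (norm (vsub (along x0 w s) x) < rho).
have -> : vsub (along x0 w s) x = fun i => rho * u i + s * w i.
  by apply: functional_extensionality => i; rewrite /along /u /vsub; field; lra.
apply: norm_lt_of_dot; first lra.
have wu : dot w u = - (a * a / 2) by rewrite a2; exact: dot_sub_unit_r.
rewrite dot_linl !dot_linr (dotC u w) wu dot_unit // -a2.
have : 0 < s * (a * a) * (rho - s) by apply: Rmult_lt_0_compat; nra.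
nra.
Qed.

End NearestBoundaryPoint.

Section Chart.
Context {N : nat} {O : pt N -> Prop} {r : R} {x0 n : pt N} {phi : pt N -> R}.
Hypotheses (r0 : 0 < r) (n1 : norm n = 1) (phi0 : phi vzero = 0)
  (chart : forall y, dist y x0 < r ->
     (O y <-> dot (vsub y x0) n < phi (proj_perp n (vsub y x0)))).

Lemma chart_direction_eq_normal g0 nu : has_grad phi vzero g0 -> (forall i, g0 i = 0) ->
  outer_unit_normal O x0 nu -> n = nu.
Proof.
move=> grad g00 [nu1 normal].
apply: eq_of_dot_sub0; set w := vsub n nu; apply: NNPP => w_neq0.
set a := norm w.
have a0 : 0 < a by apply: sqrt_lt_R0; have := dot_ge0 w; lra.
have a2 : a * a = dot w w := norm_sqr w.
have [d1 [d10 cone]] := normal (a / 4) ltac:(lra).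
have [d2 [d20 phi_flat]] := grad (a / 4) ltac:(lra).
set m := Rmin (Rmin d1 d2) r.
have m0 : 0 < m by apply: Rmin_pos; first apply: Rmin_pos.
have [m_d1 m_d2] : m <= d1 /\ m <= d2.
  by have := Rmin_l (Rmin d1 d2) r; have := Rmin_l d1 d2; have := Rmin_r d1 d2; rewrite -/m; lra.
have m_r : m <= r := Rmin_r _ _.
set s := m / (2 * a).
have s0 : 0 < s by apply: Rdiv_lt_0_compat; lra.
have sa : s * a = m / 2 by rewrite /s; field; lra.
have dist_y : dist (along x0 w s) x0 = s * a by rewrite dist_along0 Rabs_pos_eq //; lra.
have Oy : O (along x0 w s).
  apply: (proj2 (cone (along x0 w s) ltac:(rewrite dist_y; split; lra))).
  by rewrite vsub_along dot_scalel dist_y dot_sub_unit_r // -/w -a2; nra.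
move: Oy; rewrite chart ?dist_y; last lra.
rewrite vsub_along dot_scalel dot_sub_unit_l // -/w -a2.
set z := proj_perp n (fun i => s * w i).
have z_le : norm z <= s * a.
  apply: (Rle_trans _ _ _ (norm_proj_perp_le n _ n1)).
  by rewrite norm_scale Rabs_pos_eq -/a; lra.
have z_vzero : vsub z vzero = z.
  by apply: functional_extensionality => i; rewrite /vsub /vzero; ring.
have g0_vzero : g0 = vzero by apply: functional_extensionality.
have := phi_flat z; rewrite /dist z_vzero phi0 g0_vzero dot0l => /(_ ltac:(lra)).
have := Rle_abs (phi z - 0 - 0); have := norm_ge0 z.
have : a / 4 * norm z <= a / 4 * (s * a) by apply: Rmult_le_compat_l; lra.
nra.
Qed.

Lemma chart_inward_segment s : 0 < s < r -> O (along x0 (vscale (-1) n) s).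
Proof.
move=> [s0 s_r].
have unit_dir : norm (vscale (-1) n) = 1.
  by rewrite /vscale norm_scale n1 Rabs_Ropp Rabs_R1; ring.
rewrite chart; last by rewrite dist_along0 unit_dir Rabs_pos_eq; lra.
have dot_n : dot (vsub (along x0 (vscale (-1) n) s) x0) n = - s.
  by rewrite vsub_along dot_scalel /vscale dot_scalel dot_unit //; ring.
have -> : proj_perp n (vsub (along x0 (vscale (-1) n) s) x0) = vzero.
  apply: functional_extensionality => i.
  by rewrite /proj_perp {1}/vsub /vscale dot_n vsub_along /vscale /vzero; ring.
by rewrite dot_n phi0; lra.
Qed.

End Chart.

Lemma uniformly_smooth_inward_segment {N} (O : pt N -> Prop) (nu : pt N -> pt N) :
  uniformly_smooth O -> (forall x, boundary O x -> outer_unit_normal O x (nu x)) ->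
  exists r, 0 < r /\ forall x0 s, boundary O x0 -> 0 < s < r ->
      O (along x0 (vscale (-1) (nu x0)) s).
Proof.
move=> [r [M [r0 [_ charts]]]] normal; exists r; split=> // x0 s bx0 s_r.
have [n [phi [g [_ [n1 [grad [_ [_ [_ [_ [phi0 [g0 chart]]]]]]]]]]]] := charts x0 bx0.
rewrite -(chart_direction_eq_normal r0 n1 phi0 chart _ _ (grad vzero) g0 (normal x0 bx0)).
exact: chart_inward_segment n1 phi0 chart s s_r.
Qed.

Lemma near_boundary_or_far {N} (O : pt N -> Prop) (nu : pt N -> pt N) x e :
  is_open O -> O x -> (forall y, boundary O y -> outer_unit_normal O y (nu y)) ->
  dist_compl_gt O x e \/
  exists x0, boundary O x0 /\ 0 < dist x x0 <= e /\
    x = along x0 (vscale (-1) (nu x0)) (dist x x0).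
Proof.
move=> Oopen Ox normal.
case: (classic (exists y, ~ O y)) => [outside | inside]; last first.
  by left; exists (e + 1); split=> [|y Oy]; [lra | case: inside; exists y].
have [x0 [Ox0 nearest]] := exists_nearest_outside O x Oopen outside.
case: (Rle_lt_dec (dist x x0) e) => [near | far]; last by left; exists (dist x x0).
have bx0 := nearest_outside_boundary Oopen Ox Ox0 nearest.
right; exists x0; split=> //; split; last exact: nearest_outside_along_normal (normal x0 bx0).
by split=> //; exact: dist_outside_pos Oopen x x0 Ox Ox0.
Qed.

Lemma derivable_along {N} {O : pt N -> Prop} {v G D} {p w : pt N} {t s : R} :
  C1_closure O v G D -> O (along p w s) ->
  derivable_pt_lim (fun s => v (along p w s) t) s (dot (G (along p w s) t) w).
Proof.
move=> [diff _] Oy eps eps0; set y := along p w s.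
have w0 := norm_ge0 w.
have [d [d0 near]] := diff y t Oy (eps / (norm w + 1)) ltac:(apply: Rdiv_lt_0_compat; lra).
have dw0 : 0 < d / (norm w + 1) by apply: Rdiv_lt_0_compat; lra.
exists (mkposreal _ dw0) => h h0 /= hd.
have hw : Rabs h * norm w < d.
  have : Rabs h * (norm w + 1) < d / (norm w + 1) * (norm w + 1) by apply: Rmult_lt_compat_r; lra.
  have -> : d / (norm w + 1) * (norm w + 1) = d by field; lra.
  have := Rabs_pos h; nra.
have := near (along p w (s + h)) t; rewrite dist2_same dist_along Rminus_diag Rmult_0_r Rminus_0_r.
have -> : s + h - s = h by ring.
have -> : vsub (along p w (s + h)) y = fun i => h * w i.
  by apply: functional_extensionality => i; rewrite /vsub /y /along; ring.
rewrite (dotC _ (fun i => _)) dot_scalel (dotC w) => /(_ hw) bound.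
have ha : 0 < Rabs h by apply: Rabs_pos_lt.
have -> : (v (along p w (s + h)) t - v y t) / h - dot (G y t) w =
          (v (along p w (s + h)) t - v y t - h * dot (G y t) w) / h by field.
rewrite /Rdiv Rabs_mult Rabs_inv.
apply: (Rle_lt_trans _ (eps / (norm w + 1) * (Rabs h * norm w) * / Rabs h)).
  by apply: Rmult_le_compat_r; first exact/Rlt_le/Rinv_0_lt_compat.
have -> : eps / (norm w + 1) * (Rabs h * norm w) * / Rabs h = eps * (norm w / (norm w + 1)).
  by field; lra.
rewrite -[X in _ < X]Rmult_1_r; apply: Rmult_lt_compat_l => //.
by apply: (Rmult_lt_reg_r (norm w + 1)); [lra | field_simplify; lra].
Qed.

Lemma affine_bound_of_deriv (f f' : R -> R) R0 g K :
  (forall s, 0 < s < R0 -> derivable_pt_lim f s (f' s)) ->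
  (forall s, 0 < s < R0 -> Rabs (f' s - g) <= K) ->
  (forall e, 0 < e -> exists d, 0 < d /\ forall s, 0 < s < d -> Rabs (f s - f 0) < e) ->
  forall b, 0 < b < R0 -> Rabs (f b - f 0 - g * b) <= K * b.
Proof.
move=> df f'_near_g right_cont b [b0 bR0].
have K0 : 0 <= K by have := f'_near_g b (conj b0 bR0); have := Rabs_pos (f' b - g); lra.
have mean_value a : 0 < a < b -> Rabs (f b - f a - g * (b - a)) <= K * (b - a).
  move=> [a0 ab]; have [c [-> [ac cb]]] := MVT_cor2 f f' a b ab (fun c hc => df c ltac:(lra)).
  rewrite (_ : _ - _ = (f' c - g) * (b - a)); last ring.
  rewrite Rabs_mult (Rabs_pos_eq (b - a)); last lra.
  by apply: Rmult_le_compat_r; [lra | apply: f'_near_g; lra].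
apply: Rle_plus_epsilon => eta eta0.
have [d [d0 fa_near]] := right_cont (eta / 2) ltac:(lra).
have g1 : 0 < Rabs g + 1 by have := Rabs_pos g; lra.
set m := Rmin (Rmin d b) (eta / (2 * (Rabs g + 1))).
have m0 : 0 < m by apply: Rmin_pos; [apply: Rmin_pos | apply: Rdiv_lt_0_compat]; lra.
have [m_d m_b] : m <= d /\ m <= b.
  have := Rmin_l (Rmin d b) (eta / (2 * (Rabs g + 1))); rewrite -/m.
  by have := Rmin_l d b; have := Rmin_r d b; split; lra.
have gm : Rabs g * m <= eta / 2.
  have /(Rmult_le_compat_l (Rabs g + 1) _ _ (Rlt_le _ _ g1)) :=
    Rmin_r (Rmin d b) (eta / (2 * (Rabs g + 1))).
  have -> : (Rabs g + 1) * (eta / (2 * (Rabs g + 1))) = eta / 2 by field; lra.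
  rewrite -/m; have := Rabs_pos g; nra.
set a := m / 2.
have [a0 [a_d a_b]] : 0 < a /\ a < d /\ a < b by rewrite /a; split; [|split]; lra.
have ga : Rabs g * a <= eta / 2 by rewrite /a; have := Rabs_pos g; nra.
have := mean_value a (conj a0 a_b); have := fa_near a (conj a0 a_d).
have := Rabs_triang (f b - f a - g * (b - a)) (f a - f 0 - g * a).
have -> : f b - f a - g * (b - a) + (f a - f 0 - g * a) = f b - f 0 - g * b by ring.
have := Rabs_triang (f a - f 0) (- (g * a)).
rewrite Rabs_Ropp Rabs_mult (Rabs_pos_eq a) -/(Rminus _ (g * a)); last lra.
have := Rmult_le_pos _ _ K0 (Rlt_le _ _ a0); lra.
Qed.

Lemma pos_of_inf_interior {N} (O : pt N -> Prop) (v : pt N -> R -> R) :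
  is_open O ->
  (forall e, 0 < e -> exists c, 0 < c /\ forall x t, dist_compl_gt O x e -> c <= v x t) ->
  forall x t, O x -> 0 < v x t.
Proof.
move=> O_open v_inf x t Ox; have [r [r0 ball]] := O_open x Ox.
have [c [c0 cv]] := v_inf (r / 2) ltac:(lra).
apply: (Rlt_le_trans _ c) => //; apply: cv; exists r; split=> [|y Oy]; first lra.
by apply: Rnot_lt_le => near; apply: Oy; apply: ball; rewrite distC.
Qed.

Lemma ge0_on_closure {N} {O : pt N -> Prop} {v G D} {x : pt N} {t : R} :
  C1_closure O v G D -> (forall y, O y -> 0 < v y t) -> closure O x -> 0 <= v x t.
Proof.
move=> [_ cont] v_pos cx; apply: Rnot_lt_le => neg.
have [d [d0 near]] := cont x t cx (- v x t / 2) ltac:(lra).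
have [y [Oy yx]] := cx d d0.
have [vyx _] := near y t (closure_of O y Oy) ltac:(rewrite dist2_same //).
by have := v_pos y Oy; have := Rle_abs (v y t - v x t); lra.
Qed.

Lemma C1_affine_along {N} {O : pt N -> Prop} {v G D} {p w : pt N} {t R0 K : R} :
  C1_closure O v G D -> closure O p -> 0 < R0 ->
  (forall s, 0 < s < R0 -> O (along p w s)) ->
  (forall s, 0 < s < R0 -> Rabs (dot (G (along p w s) t) w - dot (G p t) w) <= K) ->
  forall b, 0 < b < R0 -> Rabs (v (along p w b) t - v p t - dot (G p t) w * b) <= K * b.
Proof.
move=> C1 cp R00 segment G_near.
rewrite -{2}(along0 p w).
apply: (affine_bound_of_deriv (fun s => v (along p w s) t)) => [s s_R0 | s s_R0 | e e0].
- exact: derivable_along C1 (segment s s_R0).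
- exact: G_near.
have [d [d0 near]] := (proj2 C1) p t cp e e0.
have w0 := norm_ge0 w.
have dw0 : 0 < d / (norm w + 1) by apply: Rdiv_lt_0_compat; lra.
exists (Rmin R0 (d / (norm w + 1))); split=> [|s [s0 s_min]]; first exact: Rmin_pos.
have s_R0 : s < R0 by have := Rmin_l R0 (d / (norm w + 1)); lra.
have s_d : s * (norm w + 1) < d.
  have := Rmin_r R0 (d / (norm w + 1)) => md.
  have := Rmult_lt_compat_r (norm w + 1) _ _ ltac:(lra) (Rlt_le_trans _ _ _ s_min md).
  by have -> : d / (norm w + 1) * (norm w + 1) = d by field; lra.
rewrite along0; apply: (proj1 (near _ t (closure_of _ _ (segment s (conj s0 s_R0))) _)).
by rewrite dist2_same dist_along0 Rabs_pos_eq; nra.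
Qed.

Lemma inward_normal_affine {N} (O : pt N -> Prop) (nu : pt N -> pt N) v G D K :
  uniformly_smooth O -> (forall x, boundary O x -> outer_unit_normal O x (nu x)) ->
  C1_closure O v G D -> unif_cont_closure O G -> 0 < K ->
  exists R0, 0 < R0 /\ forall x0 t b, boundary O x0 -> 0 < b < R0 ->
    O (along x0 (vscale (-1) (nu x0)) b) /\
    Rabs (v (along x0 (vscale (-1) (nu x0)) b) t - v x0 t + dot (nu x0) (G x0 t) * b) <= K * b.
Proof.
move=> smooth normal C1 G_unif K0.
have [r [r0 segment]] := uniformly_smooth_inward_segment O nu smooth normal.
have [dG [dG0 G_close]] := G_unif K K0.
exists (Rmin r dG); split=> [|x0 t b bx0 b_R0]; first exact: Rmin_pos.
set m := vscale (-1) (nu x0).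
have seg s : 0 < s < Rmin r dG -> O (along x0 m s).
  by move=> s_R0; apply: segment => //; have := Rmin_l r dG; lra.
split; first exact: seg.
have m1 : norm m = 1.
  by rewrite /m /vscale norm_scale (proj1 (normal x0 bx0)) Rabs_Ropp Rabs_R1; ring.
have G_near s : 0 < s < Rmin r dG -> Rabs (dot (G (along x0 m s) t) m - dot (G x0 t) m) <= K.
  move=> s_R0; rewrite -dot_subl; apply: (Rle_trans _ _ _ (dot_CS _ _)); rewrite m1 Rmult_1_r.
  apply/Rlt_le/G_close; [exact/closure_of/seg | exact: (proj1 bx0) |].
  by rewrite dist2_same dist_along0 m1 Rabs_pos_eq; have := Rmin_r r dG; lra.
have := C1_affine_along C1 (proj1 bx0) (Rmin_pos _ _ r0 dG0) seg G_near b b_R0.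
have -> : dot (nu x0) (G x0 t) = - dot (G x0 t) m.
  by rewrite /m /vscale (dotC (G x0 t)) dot_scalel; ring.
by have -> : forall X Y Z, X - Y + - Z * b = X - Y - Z * b by move=> *; ring.
Qed.

Lemma boundary_layer_inequality (v1x v1x0 f0 fx fs gg c L rho sg k : R) :
  0 < c -> 0 <= L -> 0 < rho -> 2 * rho <= sg -> 4 * rho <= 1 -> 8 * L * rho <= c ->
  2 <= k -> 4 * L <= k * c ->
  0 <= f0 -> 0 < fx -> 0 < fs ->
  v1x <= v1x0 + L * rho -> v1x0 <= f0 -> v1x0 - f0 + Rmin gg 0 <= - c ->
  Rabs (fx - f0 + gg * rho) <= c / 2 * rho -> Rabs (fs - f0 + gg * sg) <= c / 2 * sg ->
  v1x <= k * fx.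
Proof.
move=> c0 L0 rho0 rho_sg rho1 Lrho k2 kL f00 fx0 fs0 lip bd gap ax asg.
have := Rle_abs (fx - f0 + gg * rho); have := Rle_abs (- (fx - f0 + gg * rho)).
have := Rle_abs (fs - f0 + gg * sg); have := Rle_abs (- (fs - f0 + gg * sg)).
rewrite !Rabs_Ropp => asg1 asg2 ax1 ax2.
have kfx : 2 * fx <= k * fx by nra.
case: (Rle_lt_dec 0 gg) => [g0 | g0].
  rewrite Rmin_right in gap; last lra.
  (* fs > 0 caps the slope: gg * sg < f0 + c/2 * sg *)
  have : gg * rho <= f0 / 2 + c / 2 * rho by nra.
  nra.
rewrite Rmin_left in gap; last lra.
case: (Rle_lt_dec gg (- (3 * c / 4))) => [g1 | g1]; last nra.
have : c / 4 * rho <= fx - f0 by nra.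
nra.
Qed.

Definition layer_width (c L R0 : R) : R :=
  Rmin (Rmin (R0 / 4) (1 / 4)) (c / (8 * (Rabs L + 1))).

Lemma layer_width_gt0 c L R0 : 0 < c -> 0 < R0 -> 0 < layer_width c L R0.
Proof.
move=> c0 R00; have L0 := Rabs_pos L; rewrite /layer_width.
by apply: Rmin_pos; [apply: Rmin_pos | apply: Rdiv_lt_0_compat]; lra.
Qed.

Section BoundaryLayer.
Context {N : nat} {Omega : pt N -> Prop} {nu : pt N -> pt N}
  {v1 v2 : pt N -> R -> R} {G : pt N -> R -> pt N} {c L R0 : R}.
Hypotheses (c0 : 0 < c) (R00 : 0 < R0)
  (v1_lip : forall x t y s, closure Omega x -> closure Omega y ->
     Rabs (v1 x t - v1 y s) <= L * dist2 x t y s)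
  (v1_le_v2 : forall x t, boundary Omega x -> v1 x t <= v2 x t)
  (gap : forall x t, boundary Omega x -> v1 x t - v2 x t + Rmin (dot (nu x) (G x t)) 0 <= - c)
  (v2_pos : forall x t, Omega x -> 0 < v2 x t)
  (v2_ge0 : forall x t, boundary Omega x -> 0 <= v2 x t)
  (inward : forall x0 (t b : R), boundary Omega x0 -> 0 < b < R0 ->
     Omega (along x0 (vscale (-1) (nu x0)) b) /\
     Rabs (v2 (along x0 (vscale (-1) (nu x0)) b) t - v2 x0 t + dot (nu x0) (G x0 t) * b)
       <= c / 2 * b).

Lemma v1_le_in_boundary_layer x x0 t k : Omega x -> boundary Omega x0 ->
  0 < dist x x0 <= layer_width c L R0 -> x = along x0 (vscale (-1) (nu x0)) (dist x x0) ->
  2 <= k -> 4 * Rabs L <= k * c -> v1 x t <= k * v2 x t.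
Proof.
move=> Ox bx0; set rho := dist x x0 => rho_width x_eq k2 kL.
have [rho_R0 [rho_1 rho_L]] : rho <= R0 / 4 /\ rho <= 1 / 4 /\ rho <= c / (8 * (Rabs L + 1)).
  move: rho_width; rewrite /layer_width.
  have := Rmin_l (Rmin (R0 / 4) (1 / 4)) (c / (8 * (Rabs L + 1))).
  have := Rmin_r (Rmin (R0 / 4) (1 / 4)) (c / (8 * (Rabs L + 1))).
  by have := Rmin_l (R0 / 4) (1 / 4); have := Rmin_r (R0 / 4) (1 / 4); lra.
have [O_inner affine_inner] := inward x0 t (R0 / 2) bx0 ltac:(lra).
have [_ affine_x] := inward x0 t rho bx0 ltac:(lra).
rewrite -x_eq in affine_x.
have L0 := Rabs_pos L.
apply: (boundary_layer_inequality (v1 x t) (v1 x0 t) (v2 x0 t) (v2 x t)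
          (v2 (along x0 (vscale (-1) (nu x0)) (R0 / 2)) t) (dot (nu x0) (G x0 t))
          c (Rabs L) rho (R0 / 2));
  rewrite -/rho; try lra; auto.
- have := Rmult_le_compat_l (8 * (Rabs L + 1)) _ _ ltac:(lra) rho_L.
  have -> : 8 * (Rabs L + 1) * (c / (8 * (Rabs L + 1))) = c by field; lra.
  nra.
- have := v1_lip x t x0 t (closure_of _ _ Ox) (proj1 bx0); rewrite dist2_same -/rho.
  by have := Rle_abs (v1 x t - v1 x0 t); have := Rle_abs L; nra.
Qed.

End BoundaryLayer.

Theorem mainTheorem13 (N : nat) (Omega : pt N -> Prop) (nu : pt N -> pt N)
    (v1 v2 : pt N -> R -> R) (G : pt N -> R -> pt N) (D : pt N -> R -> R) :
  domain Omega ->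
  uniformly_smooth Omega ->
  (forall x, boundary Omega x -> outer_unit_normal Omega x (nu x)) ->
  W1inf Omega v1 ->
  C1_closure Omega v2 G D ->
  (forall x t, boundary Omega x -> v1 x t <= v2 x t) ->
  unif_cont_closure Omega G ->
  (exists c, 0 < c /\ forall x t, boundary Omega x ->
      v1 x t - v2 x t + Rmin (dot (nu x) (G x t)) 0 <= - c) ->
  (forall e, 0 < e -> exists c, 0 < c /\
      forall x t, dist_compl_gt Omega x e -> c <= v2 x t) ->
  exists k, 0 < k /\ forall x t, Omega x -> v1 x t <= k * v2 x t.
Proof.
move=> [O_open _] smooth normal [[B v1B] [L v1_lip]] v2C1 v1_le_v2 G_unif [c [c0 gap]] v2_inf.
have v2_pos := pos_of_inf_interior Omega v2 O_open v2_inf.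
have v2_ge0 x t (bx : boundary Omega x) := ge0_on_closure v2C1 (fun y => v2_pos y t) (proj1 bx).
have [R0 [R00 inward]] :=
  inward_normal_affine Omega nu v2 G D (c / 2) smooth normal v2C1 G_unif ltac:(lra).
have [ce [ce0 v2_far]] := v2_inf _ (layer_width_gt0 c L R0 c0 R00).
set kL := 4 * Rabs L / c; set kB := Rabs B / ce.
have kLc : kL * c = 4 * Rabs L by rewrite /kL; field; lra.
have kBce : kB * ce = Rabs B by rewrite /kB; field; lra.
have L0 := Rabs_pos L; have B0 := Rabs_pos B.
have kL0 : 0 <= kL by nra.
have kB0 : 0 <= kB by nra.
exists (2 + kL + kB); split=> [|x t Ox]; first lra.
case: (near_boundary_or_far Omega nu x (layer_width c L R0) O_open Ox normal)
  => [far | [x0 [bx0 [rho_width x_eq]]]].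
  have := v2_far x t far; have := v1B x t (closure_of _ _ Ox).
  have := v2_pos x t Ox; have := Rle_abs (v1 x t); have := Rle_abs B; nra.
apply: (v1_le_in_boundary_layer c0 R00 v1_lip v1_le_v2 gap v2_pos v2_ge0 inward _ _ _ _ Ox bx0)
  => //; [lra | nra].
Qed.
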